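(* For any graph $G$: (i) $ct_{\gamma_{t2}}(G) = 1$ if and only if there exists a minimum semitotal dominating set $D$ of $G$ such that $D$ contains a friendly triple. (ii) $ct_{\gamma_{t2}}(G) = 2$ if and only if no minimum semitotal dominating set of $G$ contains a friendly triple and there exists a semitotal dominating set of $G$ of size $\gamma_{t2}(G) + 1$ that contains an ST-configuration.
   Context: All graphs are finite, simple and connected; $d_G(u,v)$ is the distance in $G$. A semitotal dominating set of $G$ is a set $D\subseteq V(G)$ such that every vertex of $V(G)\setminus D$ has a neighbour in $D$ and every vertex of $D$ is at distance at most two from some other vertex of $D$; $\gamma_{t2}(G)$ is the minimum size of such a set, and a minimum semitotal dominating set is one of this size. Contracting an edge $uv$ means deleting $u,v$ and adding a new vertex adjacent to every neighbour of $u$ or $v$; $ct_{\gamma_{t2}}(G)$ is the smallest $k$ such that contracting some $k$ edges of $G$ yields a graph $G'$ with $\gamma_{t2}(G')<\gamma_{t2}(G)$. A friendly triple is a set of three distinct vertices $x,y,z$ with $xy\in E(G)$ and $d_G(y,z)\leq 2$. A set $S$ contains an ST-configuration if $S$ contains distinct vertices forming one of the following (other edges among them may also be present): (O1) $a,b,c,d,e,f$ with $ab,bc,de,ef\in E(G)$; (O2) $a,b,c,d,e,f$ with $ab,de,ef\in E(G)$ and $d_G(b,c)=2$; (O3) $a,b,c,d,e,f$ with $ab,de\in E(G)$, $d_G(b,c)=2$ and $d_G(e,f)=2$, where $c$ and $f$ are allowed to be the same vertex (all other listed vertices distinct); (O4) $a,b,c,d$ with $ab,ac,ad\in E(G)$;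 (O5) $a,b,c,d$ with $ab,bc\in E(G)$ and $d_G(c,d)=2$; (O6) $a,b,c,d$ with $ab,bd\in E(G)$ and $d_G(b,c)=2$; (O7) $a,b,c,d$ with $ab,cd\in E(G)$ and $d_G(b,c)=2$. *)

(* A graph G on vertex set V : {set T} with adjacency e : rel T.
   The original graph has V = [set: T]; contracted graphs keep a subset of T. *)
From mathcomp Require Import all_boot.
Set Implicit Arguments. Unset Strict Implicit. Unset Printing Implicit Defensive.

Section Graphs.
Variable T : finType.

Record graph := Graph { gV : {set T}; gE : rel T }.

Definition adj (G : graph) (x y : T) : bool :=
  [&& x \in gV G, y \in gV G, x != y & gE G x y].

Definition dist_le2 (G : graph) (x y : T) : bool :=
  [&& x \in gV G, y \in gV G &
      [|| x == y, adj G x y | [exists z, adj G x z && adj G z y]]].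

Definition dist_eq2 (G : graph) (x y : T) : Prop :=
  x != y /\ ~~ adj G x y /\ exists z, adj G x z /\ adj G z y.

Definition semitotal_dom (G : graph) (D : {set T}) : bool :=
  [&& D \subset gV G,
      [forall x in gV G :\: D, exists y in D, adj G x y] &
      [forall x in D, exists y in D, (y != x) && dist_le2 G x y]].

(* gamma_t2(G): minimum size of a semitotal dominating set
   (the default #|T| is never used for the graphs considered, which always
   have a semitotal dominating set). *)
Definition gamma_t2 (G : graph) : nat :=
  \big[minn/#|T|]_(D : {set T} | semitotal_dom G D) #|D|.

Definition min_semitotal_dom (G : graph) (D : {set T}) : Prop :=
  semitotal_dom G D /\ #|D| = gamma_t2 G.

(* contraction of the edge uv: v is deleted and u plays the role of the
   new vertex, adjacent to every neighbour of u or v *)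
Definition contract (G : graph) (u v : T) : graph :=
  Graph (gV G :\ v)
        (fun x y => [|| adj G x y, (x == u) && adj G v y | (y == u) && adj G x v]).

Inductive contracts : nat -> graph -> graph -> Prop :=
| contracts0 G : contracts 0 G G
| contractsS k G u v G' : adj G u v -> contracts k (contract G u v) G' ->
    contracts k.+1 G G'.

Definition reducible_by (G : graph) (k : nat) : Prop :=
  exists G', contracts k G G' /\
    exists D, semitotal_dom G' D /\ #|D| < gamma_t2 G.

Definition ct_is (G : graph) (k : nat) : Prop :=
  reducible_by G k /\ forall j, j < k -> ~ reducible_by G j.

Definition friendly_triple (G : graph) (x y z : T) : Prop :=
  [/\ uniq [:: x; y; z], adj G x y & dist_le2 G y z].

Definition has_friendly_triple (G : graph) (D : {set T}) : Prop :=
  exists x y z, [/\ x \in D, y \in D, z \in D & friendly_triple G x y z].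

Definition has_ST_configuration (G : graph) (S : {set T}) : Prop :=
  (exists a b c d e f, [/\ uniq [:: a; b; c; d; e; f],
     all (mem S) [:: a; b; c; d; e; f] &
     [/\ adj G a b, adj G b c, adj G d e & adj G e f]]) \/
  (exists a b c d e f, [/\ uniq [:: a; b; c; d; e; f],
     all (mem S) [:: a; b; c; d; e; f] &
     [/\ adj G a b, adj G d e, adj G e f & dist_eq2 G b c]]) \/
  (* O3 (c = f allowed) *)
  (exists a b c d e f, [/\ uniq [:: a; b; c; d; e], uniq [:: a; b; d; e; f],
     all (mem S) [:: a; b; c; d; e; f] &
     [/\ adj G a b, adj G d e, dist_eq2 G b c & dist_eq2 G e f]]) \/
  (exists a b c d, [/\ uniq [:: a; b; c; d], all (mem S) [:: a; b; c; d] &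
     [/\ adj G a b, adj G a c & adj G a d]]) \/
  (exists a b c d, [/\ uniq [:: a; b; c; d], all (mem S) [:: a; b; c; d] &
     [/\ adj G a b, adj G b c & dist_eq2 G c d]]) \/
  (exists a b c d, [/\ uniq [:: a; b; c; d], all (mem S) [:: a; b; c; d] &
     [/\ adj G a b, adj G b d & dist_eq2 G b c]]) \/
  (exists a b c d, [/\ uniq [:: a; b; c; d], all (mem S) [:: a; b; c; d] &
     [/\ adj G a b, adj G c d & dist_eq2 G b c]]).

End Graphs.

(* Contracting an edge uv lowers gamma_t2 by at most one: a semitotal
   dominating set of G/uv lifts to G by adding u or v, and the lifted set
   always contains a friendly triple formed by the edge uv and a partner of u
   or v.  Conversely, if a semitotal dominating set D contains a friendly triple
   (x, y, z), then contracting yx makes x redundant: the merged vertex y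
   inherits the neighbours of x, and z stays within distance two of y.
   For ct = 2, applying both facts twice shows that the relevant sets have size
   gamma_t2 + 1 and contain friendly triples (x, y, z) and (p, q, r) with x
   outside the second one, so that contracting yx and then qp removes x and p.
   A case analysis on how two such triples can overlap shows that this is
   equivalent to containing an ST-configuration. *)

From mathcomp Require Import all_boot all_order.
Set Implicit Arguments. Unset Strict Implicit. Unset Printing Implicit Defensive.

Import Order.TTheory.

Section SemitotalContraction.
Variable T : finType.
Implicit Types (G : graph T) (D : {set T}).

Lemma adj_inV G x y : adj G x y -> [/\ x \in gV G, y \in gV G & x != y].
Proof. by case/and4P. Qed.

Lemma dist_le2P G x y :
  reflect [/\ x \in gV G, y \in gV G &
              [\/ x = y, adj G x y | exists2 m, adj G x m & adj G m y]]
          (dist_le2 G x y).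
Proof.
apply: (iffP and3P) => -[xV yV H]; split=> //.
  case/or3P: H => [/eqP ->|xy|/existsP[m /andP[xm my]]]; first by apply: Or31.
    exact: Or32.
  by apply: Or33; exists m.
case: H => [->|->|[m xm my]]; rewrite ?eqxx ?orbT //.
by apply/or3P; apply: Or33; apply/existsP; exists m; rewrite xm.
Qed.

Lemma dist_le2_refl G x : x \in gV G -> dist_le2 G x x.
Proof. by move=> xV; apply/dist_le2P; split=> //; apply: Or31. Qed.

Lemma adj_dist_le2 G x y : adj G x y -> dist_le2 G x y.
Proof. by move=> xy; have [xV yV _] := adj_inV xy; apply/dist_le2P; split=> //; apply: Or32. Qed.

Lemma adj2_dist_le2 G x m y : adj G x m -> adj G m y -> dist_le2 G x y.
Proof.
move=> xm my; have [xV _ _] := adj_inV xm; have [_ yV _] := adj_inV my.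
by apply/dist_le2P; split=> //; apply: Or33; exists m.
Qed.

Lemma dist_eq2_le2 G x y : dist_eq2 G x y -> dist_le2 G x y.
Proof. by case=> _ [_ [m []]]; apply: adj2_dist_le2. Qed.

Lemma dist_le2C G : symmetric (adj G) -> symmetric (dist_le2 G).
Proof.
suff le2C: symmetric (adj G) -> forall x y, dist_le2 G x y -> dist_le2 G y x.
  by move=> sG x y; apply/idP/idP; apply: le2C.
move=> sG x y /dist_le2P[xV yV [->|xy|[m xm my]]]; first exact: dist_le2_refl.
  by apply: adj_dist_le2; rewrite sG.
by apply: (@adj2_dist_le2 _ _ m); rewrite sG.
Qed.

Lemma dist_le2_adjVeq2 G x y : x != y -> dist_le2 G x y -> adj G x y \/ dist_eq2 G x y.
Proof.
move=> nxy /dist_le2P[_ _ [exy|xy|[m xm my]]]; first by rewrite exy eqxx in nxy.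
  by left.
by case xy: (adj G x y); [left | right; split=> //; split; [rewrite xy | exists m]].
Qed.

Lemma dist_le2_near_edge G u v a s : symmetric (adj G) -> adj G u v ->
  a = u \/ a = v -> adj G s v \/ adj G s u -> dist_le2 G s a.
Proof.
move=> sG uv [->|->] [sv|su]; try exact: adj_dist_le2.
  by apply: (@adj2_dist_le2 _ _ v); rewrite // sG.
exact: (@adj2_dist_le2 _ _ u).
Qed.

Lemma adj_contractP G u v x y :
  reflect [/\ x \in gV G :\ v, y \in gV G :\ v, x != y &
              [\/ adj G x y, x = u /\ adj G v y | y = u /\ adj G x v]]
          (adj (contract G u v) x y).
Proof.
apply: (iffP and4P) => -[xV yV nxy H]; split=> //.
  case/or3P: H => [xy|/andP[/eqP xu vy]|/andP[/eqP yu xv]]; first exact: Or31.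
    exact: Or32.
  exact: Or33.
by rewrite /=; case: H => [->|[-> ->]|[-> ->]]; rewrite ?eqxx ?orbT.
Qed.

Lemma contract_sym G u v : symmetric (adj G) -> symmetric (adj (contract G u v)).
Proof.
move=> sG; suff adjC x y : adj (contract G u v) x y -> adj (contract G u v) y x.
  by move=> x y; apply/idP/idP; apply: adjC.
case/adj_contractP=> xV yV nxy H; apply/adj_contractP; split; rewrite 1?eq_sym //.
case: H => [xy|[-> vy]|[-> xv]]; first by apply: Or31; rewrite sG.
  by apply: Or33; rewrite sG.
by apply: Or32; rewrite sG.
Qed.

Lemma adj_contract G u v x y : x != v -> y != v -> adj G x y -> adj (contract G u v) x y.
Proof.
move=> xv yv xy; have [xV yV nxy] := adj_inV xy.
by apply/adj_contractP; split; rewrite ?inE ?xv ?yv //; apply: Or31.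
Qed.

Lemma adj_contractl G u v x : adj G u v -> x != u -> adj G x v -> adj (contract G u v) x u.
Proof.
move=> uv xu xv; have [uV _ uv'] := adj_inV uv; have [xV _ xv'] := adj_inV xv.
apply/adj_contractP; split; last by apply: Or33.
- by rewrite !inE xv' xV.
- by rewrite !inE uv' uV.
- exact: xu.
Qed.

Lemma adj_contractr G u v x : adj G u v -> x != u -> adj G v x -> adj (contract G u v) u x.
Proof.
move=> uv xu vx; have [uV _ uv'] := adj_inV uv; have [_ xV vx'] := adj_inV vx.
apply/adj_contractP; split; last by apply: Or32.
- by rewrite !inE uv' uV.
- by rewrite !inE eq_sym vx' xV.
- by rewrite eq_sym.
Qed.

Lemma dist_le2_contract G u v x y : adj G u v -> x != v -> y != v ->
  dist_le2 G x y -> dist_le2 (contract G u v) x y.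
Proof.
move=> uv xv yv /dist_le2P[xV yV [<-|xy|[m xm my]]].
- by apply: dist_le2_refl; rewrite !inE xv xV.
- by apply: adj_dist_le2; apply: adj_contract.
have [emv|mv] := eqVneq m v; last by apply: (@adj2_dist_le2 _ _ m); apply: adj_contract.
subst m.
have [<-|nxy] := eqVneq x y; first by apply: dist_le2_refl; rewrite !inE xv xV.
have [exu|xu] := eqVneq x u.
  by subst x; apply/adj_dist_le2/adj_contractr; rewrite // eq_sym.
have [eyu|yu] := eqVneq y u; first by subst y; apply/adj_dist_le2/adj_contractl.
by apply: (@adj2_dist_le2 _ _ u); [apply: adj_contractl | apply: adj_contractr].
Qed.

Lemma dist_le2_contractl G u v x : adj G u v -> x != v -> x != u ->
  dist_le2 G x v -> dist_le2 (contract G u v) x u.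
Proof.
move=> uv xv xu /dist_le2P[_ _ [xv'|xv'|[m xm mv]]]; first by rewrite xv' eqxx in xv.
  by apply: adj_dist_le2; apply: adj_contractl.
have [emu|mu] := eqVneq m u.
  by subst m; have [_ _ uv'] := adj_inV uv; apply/adj_dist_le2/adj_contract.
have [_ _ mv'] := adj_inV mv.
by apply: (@adj2_dist_le2 _ _ m); [apply: adj_contract | apply: adj_contractl].
Qed.

Lemma dist_le2_uncontract G u v x y : symmetric (adj G) ->
  dist_le2 (contract G u v) x y ->
  [\/ dist_le2 G x y, x = u /\ dist_le2 G v y, y = u /\ dist_le2 G x v |
      (adj G x v \/ adj G x u) /\ (adj G y v \/ adj G y u)].
Proof.
move=> sG /dist_le2P[xV yV [<-|xy|[m xm my]]].
- by apply: Or41; apply: dist_le2_refl; move: xV; rewrite inE => /andP[].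
- case/adj_contractP: xy => _ _ _ [xy|[-> vy]|[-> xv]].
  + by apply: Or41; apply: adj_dist_le2.
  + by apply: Or42; split=> //; apply: adj_dist_le2.
  + by apply: Or43; split=> //; apply: adj_dist_le2.
case/adj_contractP: xm => _ _ _ [xm|[xu vm]|[mu xv]];
case/adj_contractP: my => _ _ _ [my|[mu' vy]|[yu mv]].
- by apply: Or41; apply: adj2_dist_le2 xm my.
- by subst m; apply: Or44; split; [right | left; rewrite sG].
- by apply: Or43; split=> //; apply: adj2_dist_le2 xm mv.
- by apply: Or42; split=> //; apply: adj2_dist_le2 vm my.
- by apply: Or42; split=> //; apply: adj_dist_le2.
- by subst; apply: Or41; apply: dist_le2_refl; move: xV; rewrite inE => /andP[].
- by subst m; apply: Or44; split; [left | right; rewrite sG].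
- by apply: Or44; split; [left | left; rewrite sG].
- by apply: Or43; split=> //; apply: adj_dist_le2.
Qed.

(** * Semitotal domination *)

Lemma semitotal_domP G D :
  reflect [/\ D \subset gV G,
              {in gV G, forall x, x \notin D -> exists2 y, y \in D & adj G x y} &
              {in D, forall x, exists2 y, y \in D & y != x /\ dist_le2 G x y}]
          (semitotal_dom G D).
Proof.
apply: (iffP and3P) => -[DV dom tot]; split=> //.
- move=> x xV xD; have: x \in gV G :\: D by rewrite inE xD.
  by move/(forall_inP dom)/exists_inP.
- by move=> x /(forall_inP tot)/exists_inP[y yD /andP[yx xy]]; exists y.
- apply/forall_inP => x; rewrite inE => /andP[xD xV].
  by apply/exists_inP; apply: dom.
- apply/forall_inP => x /tot[y yD [yx xy]].
  by apply/exists_inP; exists y; rewrite ?yx.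
Qed.

Lemma gamma_t2_le G D : semitotal_dom G D -> gamma_t2 G <= #|D|.
Proof. by rewrite /gamma_t2 -minEnat -leEnat; apply: bigmin_le_cond. Qed.

Lemma friendly_tripleP G x y z :
  friendly_triple G x y z <-> [/\ x != y, x != z, y != z, adj G x y & dist_le2 G y z].
Proof.
rewrite /friendly_triple /= !inE !negb_or andbT.
by split=> [[/andP[/andP[xy xz] yz] x_y y_z]|[xy xz yz x_y y_z]]; split; rewrite ?xy ?xz.
Qed.

Lemma semitotal_dom_contract G D x y z : symmetric (adj G) -> semitotal_dom G D ->
  x \in D -> y \in D -> z \in D -> friendly_triple G x y z ->
  semitotal_dom (contract G y x) (D :\ x).
Proof.
move=> sG /semitotal_domP[DV dom tot] xD yD zD /friendly_tripleP[xy xz yz x_y y_z].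
have y_x : adj G y x by rewrite sG.
have yDx : y \in D :\ x by rewrite !inE yD eq_sym xy.
apply/semitotal_domP; split; first exact: setSD.
- move=> w; rewrite !inE => /andP[wx wV]; rewrite wx /= => wD.
  have [t tD w_t] := dom w wV wD.
  have [etx|tx] := eqVneq t x; last by exists t; rewrite ?inE ?tx ?tD //; apply: adj_contract.
  subst t; exists y => //; apply: adj_contractl => //.
  by apply: contraNneq wD => ->.
move=> s; rewrite !inE => /andP[sx sD].
have [esy|sy] := eqVneq s y.
  subst s; exists z; first by rewrite !inE zD eq_sym xz.
  by split; [rewrite eq_sym | apply: dist_le2_contract; rewrite // eq_sym].
have [t tD [ts s_t]] := tot s sD.
have [etx|tx] := eqVneq t x; last first.
  by exists t; [rewrite !inE tx | split=> //; apply: dist_le2_contract].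
subst t; exists y => //.
by split; [rewrite eq_sym | apply: dist_le2_contractl].
Qed.

(** * Pairs of friendly triples *)

Definition has_two_friendly_triples G D := exists x y z,
  [/\ x \in D, y \in D, z \in D, friendly_triple G x y z & has_friendly_triple G (D :\ x)].

Ltac split_hyps :=
  repeat match goal with H : is_true (_ && _) |- _ => case/andP: H => ? ? end.

Ltac side_condition sG :=
  solve [ done | by rewrite eq_sym | by rewrite sG | by rewrite dist_le2C
        | by apply: adj_dist_le2 | by apply: adj_dist_le2; rewrite sG
        | by apply: dist_eq2_le2 | by rewrite dist_le2C //; apply: dist_eq2_le2 ].

Ltac side_conditions sG :=
  rewrite /= ?in_cons ?in_nil ?orbF ?negb_or;
  repeat match goal with |- is_true (_ && _) => apply/andP; split end;
  side_condition sG.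

Lemma two_triples_intro G D x y z p q r : all (mem D) [:: x; y; z; p; q; r] ->
  p != x -> q != x -> r != x -> friendly_triple G x y z -> friendly_triple G p q r ->
  has_two_friendly_triples G D.
Proof.
rewrite /= => /and4P[xD yD zD /and4P[pD qD rD _]] px qx rx xyz pqr.
by exists x, y, z; split=> //; exists p, q, r; rewrite !inE px qx rx.
Qed.

Lemma two_triples_fork G D a b c d : symmetric (adj G) ->
  all (mem D) [:: a; b; c; d] -> uniq [:: a; b; c; d] ->
  adj G a b -> adj G b c -> dist_le2 G b d -> has_two_friendly_triples G D.
Proof.
move=> sG; rewrite /= !in_cons !negb_or => /and4P[aD bD cD /andP[dD _]].
move=> /and4P[/and4P[ab ac ad _] /and3P[bc bd _] /andP[cd _] _] a_b b_c b_d.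
apply: (@two_triples_intro _ _ a b c c b d); try side_conditions sG.
all: by apply/friendly_tripleP; split; side_conditions sG.
Qed.

Lemma two_triples_end G D a b c d : symmetric (adj G) ->
  all (mem D) [:: a; b; c; d] -> uniq [:: a; b; c; d] ->
  adj G a b -> adj G b c -> dist_le2 G c d -> has_two_friendly_triples G D.
Proof.
move=> sG; rewrite /= !in_cons !negb_or => /and4P[aD bD cD /andP[dD _]].
move=> /and4P[/and4P[ab ac ad _] /and3P[bc bd _] /andP[cd _] _] a_b b_c c_d.
apply: (@two_triples_intro _ _ a b c b c d); try side_conditions sG.
all: by apply/friendly_tripleP; split; side_conditions sG.
Qed.

Lemma two_triples_link G D a b c d : symmetric (adj G) ->
  all (mem D) [:: a; b; c; d] -> uniq [:: a; b; c; d] ->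
  adj G a b -> adj G c d -> dist_le2 G b c -> has_two_friendly_triples G D.
Proof.
move=> sG; rewrite /= !in_cons !negb_or => /and4P[aD bD cD /andP[dD _]].
move=> /and4P[/and4P[ab ac ad _] /and3P[bc bd _] /andP[cd _] _] a_b c_d b_c.
apply: (@two_triples_intro _ _ a b c d c b); try side_conditions sG.
all: by apply/friendly_tripleP; split; side_conditions sG.
Qed.

Lemma two_triples_edge_triple G D x y z p q r : symmetric (adj G) ->
  all (mem D) [:: x; y; z; p; q; r] -> adj G x y -> z != x -> z != y ->
  dist_le2 G y z \/ dist_le2 G x z ->
  p != x -> q != x -> r != x -> friendly_triple G p q r -> has_two_friendly_triples G D.
Proof.
move=> sG D6 x_y zx zy yz_xz px qx rx pqr.
move: (D6); rewrite /= => /and4P[xD yD zD /and4P[pD qD rD _]].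
have /friendly_tripleP[pq pr qr p_q q_r] := pqr.
have [_ _ xy] := adj_inV x_y.
have [eyp|yp] := eqVneq y p.
  by subst p; apply: (@two_triples_end _ _ x y q r); side_conditions sG.
have [eyq|yq] := eqVneq y q.
  by subst q; apply: (@two_triples_fork _ _ x y p r); side_conditions sG.
have [eyr|yr] := eqVneq y r.
  by subst r; apply: (@two_triples_link _ _ p q y x); side_conditions sG.
case: yz_xz => [y_z|x_z]; [apply: (@two_triples_intro _ _ x y z p q r)
                          | apply: (@two_triples_intro _ _ y x z p q r)]; try side_conditions sG.
all: by apply/friendly_tripleP; split; side_conditions sG.
Qed.

Lemma two_triples_contract_triple G D x y z p q r : symmetric (adj G) ->
  all (mem D) [:: x; y; z; p; q; r] -> adj G x y -> z != x -> z != y ->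
  dist_le2 G y z \/ dist_le2 G x z ->
  p != x -> q != x -> r != x -> friendly_triple (contract G y x) p q r ->
  has_two_friendly_triples G D.
Proof.
move=> sG D6 x_y zx zy yz_xz px qx rx /friendly_tripleP[pq pr qr p_q q_r].
move: (D6); rewrite /= => /and4P[xD yD zD /and4P[pD qD rD _]].
have [_ _ xy] := adj_inV x_y; have y_x : adj G y x by rewrite sG.
have near_xy w : adj G w x \/ adj G w y -> dist_le2 G w x /\ dist_le2 G w y.
  by move=> w_xy; split; apply: (dist_le2_near_edge sG y_x) => //; [right | left].
have G_pqr : adj G p q -> dist_le2 G q r -> has_two_friendly_triples G D.
  by move=> G_pq G_qr; apply: (two_triples_edge_triple sG D6 x_y zx zy yz_xz px qx rx);
    apply/friendly_tripleP.
case/adj_contractP: p_q => _ _ _ [p_q|[epy x_q]|[eqy p_x]];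
  case/(dist_le2_uncontract sG): q_r => [q_r|[eqy' x_r]|[ery q_x]|[q_xy /near_xy[r_x r_y]]].
all: try by [apply: G_pqr | subst; rewrite eqxx in pq pr qr].
- by subst q; apply: (@two_triples_end _ _ p y x r); side_conditions sG.
- by subst r; apply: (@two_triples_link _ _ p q x y); side_conditions sG.
- have [eqy|qy] := eqVneq q y.
    by subst q; apply: (@two_triples_end _ _ p y x r); side_conditions sG.
  have [epy|py] := eqVneq p y.
    by subst p; apply: (@two_triples_fork _ _ x y q r); side_conditions sG.
  case: q_xy => [q_x|q_y]; first by apply: (@two_triples_end _ _ p q x y); side_conditions sG.
  by apply: (@two_triples_end _ _ p q y x); side_conditions sG.
- by subst p; apply: (@two_triples_end _ _ y x q r); side_conditions sG.
- by subst p; apply: (@two_triples_fork _ _ y x q r); side_conditions sG.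
- by subst q; apply: (@two_triples_end _ _ p x y r); side_conditions sG.
- by subst q; apply: (@two_triples_fork _ _ p x y r); side_conditions sG.
by subst q; apply: (@two_triples_fork _ _ p x y r); side_conditions sG.
Qed.

(** * Lifting through a contraction *)

Section Uncontract.
Variables (G : graph T) (u v : T) (D : {set T}).
Hypotheses (sG : symmetric (adj G)) (uv : adj G u v)
  (stD : semitotal_dom (contract G u v) D).

Lemma contracted_notin : v \notin D.
Proof. by case/semitotal_domP: stD => /subsetP DV _ _; apply/negP => /DV; rewrite !inE eqxx. Qed.

Lemma contracted_sub : D \subset gV G.
Proof.
case/semitotal_domP: stD => DV _ _.
by apply: subset_trans DV _; apply: subsetDl.
Qed.

Lemma semitotal_dom_uncontract_in : u \in D -> semitotal_dom G (v |: D).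
Proof.
move=> uD; have vD := contracted_notin; have DV := contracted_sub.
case/semitotal_domP: stD => _ dom tot; have [_ vV nuv] := adj_inV uv.
have v_u : adj G v u by rewrite sG.
apply/semitotal_domP; split; first by rewrite subUset sub1set vV.
- move=> w wV; rewrite !inE negb_or => /andP[wv wD].
  have wV' : w \in gV G :\ v by rewrite !inE wv.
  have [t tD] := dom w wV' wD; case/adj_contractP=> _ _ _ [w_t|[wu _]|[_ w_v]].
  + by exists t; rewrite ?inE ?tD ?orbT.
  + by rewrite wu uD in wD.
  + by exists v; rewrite ?inE ?eqxx.
move=> s; rewrite !inE => /orP[/eqP->|sD].
  by exists u; rewrite ?inE ?uD ?orbT //; split=> //; apply: adj_dist_le2.
have sv : s != v by apply: contraNneq vD => <-.
have [esu|su] := eqVneq s u.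
  by subst s; exists v; rewrite ?inE ?eqxx //; split; [rewrite eq_sym | apply: adj_dist_le2].
have [t tD [ts]] := tot s sD.
case/(dist_le2_uncontract sG) => [s_t|[esu _]|[_ s_v]|[s_uv _]].
- by exists t; rewrite ?inE ?tD ?orbT.
- by rewrite esu eqxx in su.
- by exists v; rewrite ?inE ?eqxx //; split; rewrite // eq_sym.
exists v; rewrite ?inE ?eqxx //; split; first by rewrite eq_sym.
by apply: (dist_le2_near_edge sG uv); [right|].
Qed.

Lemma semitotal_dom_uncontract_notin a y0 : u \notin D -> a = u \/ a = v ->
  y0 \in D -> adj G y0 a -> semitotal_dom G (a |: D).
Proof.
move=> uD a_uv y0D y0_a; have vD := contracted_notin; have DV := contracted_sub.
case/semitotal_domP: stD => _ dom tot.
have aD : a \notin D by case: a_uv => ->.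
have [_ aV _] := adj_inV y0_a.
apply/semitotal_domP; split; first by rewrite subUset sub1set aV.
- move=> w wV; rewrite !inE negb_or => /andP[wa wD].
  have [ewu|wu] := eqVneq w u.
    subst w; exists a; rewrite ?inE ?eqxx //.
    by case: a_uv => ea; [rewrite ea eqxx in wa | rewrite ea].
  have [ewv|wv] := eqVneq w v.
    subst w; exists a; rewrite ?inE ?eqxx //.
    by case: a_uv => ea; [rewrite ea sG | rewrite ea eqxx in wa].
  have wV' : w \in gV G :\ v by rewrite !inE wv.
  have [t tD] := dom w wV' wD; case/adj_contractP=> _ _ _ [w_t|[ewu _]|[etu _]].
  + by exists t; rewrite ?inE ?tD ?orbT.
  + by rewrite ewu eqxx in wu.
  + by rewrite -etu tD in uD.
move=> s; rewrite !inE => /orP[/eqP->|sD].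
  exists y0; rewrite ?inE ?y0D ?orbT //.
  by split; [apply: contraNneq aD => <- | apply: adj_dist_le2; rewrite sG].
have [t tD [ts]] := tot s sD.
case/(dist_le2_uncontract sG) => [s_t|[esu _]|[etu _]|[s_uv _]].
- by exists t; rewrite ?inE ?tD ?orbT.
- by rewrite -esu sD in uD.
- by rewrite -etu tD in uD.
exists a; rewrite ?inE ?eqxx //.
by split; [apply: contraNneq aD => -> | apply: (dist_le2_near_edge sG uv)].
Qed.

Lemma contracted_dominator : u \notin D ->
  exists a y0, [/\ a = u \/ a = v, y0 \in D & adj G y0 a].
Proof.
move=> uD; case/semitotal_domP: stD => _ dom _; have [uV _ nuv] := adj_inV uv.
have uV' : u \in gV G :\ v by rewrite !inE nuv.
have [t tD] := dom u uV' uD; case/adj_contractP=> _ _ _ [u_t|[_ v_t]|[etu _]].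
- by exists u, t; split=> //; [left | rewrite sG].
- by exists v, t; split=> //; [right | rewrite sG].
by rewrite -etu tD in uD.
Qed.

Lemma partner_in : u \in D ->
  exists2 s, s \in D & s != u /\ (dist_le2 G u s \/ dist_le2 G v s).
Proof.
move=> uD; case/semitotal_domP: stD => _ _ tot.
have [s sD [su u_s]] := tot u uD; exists s => //; split=> //.
case/(dist_le2_uncontract sG): u_s => [u_s|[_ v_s]|[esu _]|[_ [s_v|s_u]]].
- by left.
- by right.
- by rewrite esu eqxx in su.
- by right; apply: adj_dist_le2; rewrite sG.
by left; apply: adj_dist_le2; rewrite sG.
Qed.

Lemma partner_notin a y0 : u \notin D -> a = u \/ a = v -> y0 \in D ->
  exists2 s, s \in D & s != y0 /\ (dist_le2 G y0 s \/ dist_le2 G a s).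
Proof.
move=> uD a_uv y0D; case/semitotal_domP: stD => _ _ tot.
have [s sD [sy0 y0_s]] := tot y0 y0D; exists s => //; split=> //.
case/(dist_le2_uncontract sG): y0_s => [y0_s|[ey0u _]|[esu _]|[_ s_uv]].
- by left.
- by rewrite -ey0u y0D in uD.
- by rewrite -esu sD in uD.
by right; rewrite dist_le2C //; apply: (dist_le2_near_edge sG uv).
Qed.

Lemma semitotal_dom_uncontract :
  exists D0, [/\ semitotal_dom G D0, #|D0| = #|D|.+1 & has_friendly_triple G D0].
Proof.
have vD := contracted_notin; have [_ _ nuv] := adj_inV uv.
have [uD|uD] := boolP (u \in D).
  exists (v |: D); split; first exact: semitotal_dom_uncontract_in.
    by rewrite cardsU1 vD.
  have [s sD [su s_uv]] := partner_in uD.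
  have sv : s != v by apply: contraNneq vD => <-.
  case: s_uv => [u_s|v_s].
    exists v, u, s; rewrite !inE eqxx uD sD !orbT; split=> //.
    by apply/friendly_tripleP; split; rewrite 1?sG // eq_sym.
  exists u, v, s; rewrite !inE eqxx uD sD !orbT; split=> //.
  by apply/friendly_tripleP; split; rewrite // eq_sym.
have [a [y0 [a_uv y0D y0_a]]] := contracted_dominator uD.
have aD : a \notin D by case: a_uv => ->.
exists (a |: D); split; first exact: semitotal_dom_uncontract_notin uD a_uv y0D y0_a.
  by rewrite cardsU1 aD.
have [s sD [sy0 s_near]] := partner_notin uD a_uv y0D.
have ay0 : a != y0 by apply: contraNneq aD => ->.
have as_ : a != s by apply: contraNneq aD => ->.
case: s_near => [y0_s|a_s].
  exists a, y0, s; rewrite !inE eqxx y0D sD !orbT; split=> //.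
  by apply/friendly_tripleP; split; rewrite 1?sG // eq_sym.
exists y0, a, s; rewrite !inE eqxx y0D sD !orbT; split=> //.
by apply/friendly_tripleP; split; rewrite // eq_sym.
Qed.

Lemma two_triples_uncontract_in : has_friendly_triple (contract G u v) D -> u \in D ->
  has_two_friendly_triples G (v |: D).
Proof.
move=> [x [y [z [xD yD zD xyz]]]] uD; have vD := contracted_notin.
have notv w : w \in D -> w != v by move=> wD; apply: contraNneq vD => <-.
have [s sD [su us_vs]] := partner_in uD.
have D6 : all (mem (v |: D)) [:: v; u; s; x; y; z].
  by rewrite /= !inE eqxx uD sD xD yD zD !orbT.
by apply: (two_triples_contract_triple sG D6 _ _ _ us_vs _ _ _ xyz); rewrite ?notv // sG.
Qed.

Lemma two_triples_uncontract_notin : has_friendly_triple (contract G u v) D -> u \notin D ->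
  exists a, [/\ a = u \/ a = v, semitotal_dom G (a |: D) & has_two_friendly_triples G (a |: D)].
Proof.
move=> [x [y [z [xD yD zD /friendly_tripleP[xy xz yz x_y y_z]]]]] uD.
have vD := contracted_notin.
have notu w : w \in D -> w != u by move=> wD; apply: contraNneq uD => <-.
have G_xy : adj G x y.
  case/adj_contractP: x_y => _ _ _ [//|[exu _]|[eyu _]].
    by case/eqP: (notu x xD).
  by case/eqP: (notu y yD).
case/(dist_le2_uncontract sG): y_z => [G_yz|[eyu _]|[ezu _]|[y_uv z_uv]].
- have [a [y0 [a_uv y0D y0_a]]] := contracted_dominator uD.
  have aD : a \notin D by case: a_uv => ->.
  have nota w : w \in D -> w != a by move=> wD; apply: contraNneq aD => <-.
  exists a; split=> //; first exact: semitotal_dom_uncontract_notin uD a_uv y0D y0_a.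
  have [s sD [sy0 y0s_as]] := partner_notin uD a_uv y0D.
  have D6 : all (mem (a |: D)) [:: a; y0; s; x; y; z].
    by rewrite /= !inE eqxx y0D sD xD yD zD !orbT.
  apply: (two_triples_edge_triple sG D6); rewrite ?nota // 1?sG //.
  by apply/friendly_tripleP; split.
- by case/eqP: (notu y yD).
- by case/eqP: (notu z zD).
have [a [a_uv y_a]] : exists a, (a = u \/ a = v) /\ adj G y a.
  by case: y_uv => y_a; [exists v; split; [right|] | exists u; split; [left|]].
have aD : a \notin D by case: a_uv => ->.
have nota w : w \in D -> w != a by move=> wD; apply: contraNneq aD => <-.
exists a; split=> //; first exact: semitotal_dom_uncontract_notin uD a_uv yD y_a.
have D4 : all (mem (a |: D)) [:: x; y; a; z] by rewrite /= !inE eqxx xD yD zD !orbT.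
apply: (two_triples_end sG D4) => //.
  by rewrite /= !in_cons !negb_or xy xz yz !(eq_sym a) !nota.
by rewrite dist_le2C //; apply: (dist_le2_near_edge sG uv).
Qed.

Lemma semitotal_dom_uncontract_two_triples : has_friendly_triple (contract G u v) D ->
  exists D0, [/\ semitotal_dom G D0, #|D0| = #|D|.+1 & has_two_friendly_triples G D0].
Proof.
move=> fD; have vD := contracted_notin.
have [uD|uD] := boolP (u \in D).
  exists (v |: D); rewrite cardsU1 vD; split=> //; first exact: semitotal_dom_uncontract_in.
  exact: two_triples_uncontract_in.
have [a [a_uv stD' two]] := two_triples_uncontract_notin fD uD.
have aD : a \notin D by case: a_uv => ->.
by exists (a |: D); rewrite cardsU1 aD.
Qed.

End Uncontract.

(** * ST-configurations *)

Section STConfigurations.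
Variables (G : graph T) (S : {set T}).
Hypothesis sG : symmetric (adj G).

Lemma ST_path4 a b c d : all (mem S) [:: a; b; c; d] -> uniq [:: a; b; c; d] ->
  adj G a b -> adj G b c -> adj G c d -> has_ST_configuration G S.
Proof.
rewrite /= !in_cons !negb_or => /and4P[aS bS cS /andP[dS _]].
move=> /and4P[/and4P[ab ac ad _] /and3P[bc bd _] /andP[cd _] _] a_b b_c c_d.
case a_c: (adj G a c).
  by do 3 right; left; exists c, b, d, a; split; last split; side_conditions sG.
do 5 right; left; exists d, c, a, b; split; last split; try side_conditions sG.
by split; [rewrite eq_sym | split; [rewrite sG a_c | exists b; split; rewrite sG]].
Qed.

Lemma ST_fork a b c d : all (mem S) [:: a; b; c; d] -> uniq [:: a; b; c; d] ->
  adj G a b -> adj G b c -> dist_le2 G b d -> has_ST_configuration G S.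
Proof.
rewrite /= !in_cons !negb_or => /and4P[aS bS cS /andP[dS _]].
move=> /and4P[/and4P[ab ac ad _] /and3P[bc bd _] /andP[cd _] _] a_b b_c.
case/(dist_le2_adjVeq2 bd) => [b_d|b_d].
  by do 3 right; left; exists b, a, c, d; split; last split; side_conditions sG.
by do 5 right; left; exists a, b, d, c; split; last split; side_conditions sG.
Qed.

Lemma ST_end a b c d : all (mem S) [:: a; b; c; d] -> uniq [:: a; b; c; d] ->
  adj G a b -> adj G b c -> dist_le2 G c d -> has_ST_configuration G S.
Proof.
move=> S4 U4; move: (U4); rewrite /= !in_cons !negb_or.
move=> /and4P[_ /and3P[_ _ _] /andP[cd _] _] a_b b_c.
case/(dist_le2_adjVeq2 cd) => c_d; first exact: ST_path4 S4 U4 _ _ c_d.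
by do 4 right; left; exists a, b, c, d.
Qed.

Lemma ST_link a b c d : all (mem S) [:: a; b; c; d] -> uniq [:: a; b; c; d] ->
  adj G a b -> adj G c d -> dist_le2 G b c -> has_ST_configuration G S.
Proof.
move=> S4 U4; move: (U4); rewrite /= !in_cons !negb_or.
move=> /and4P[_ /and3P[bc _ _] _ _] a_b c_d.
case/(dist_le2_adjVeq2 bc) => b_c; first exact: ST_path4 S4 U4 a_b b_c c_d.
by do 6 right; exists a, b, c, d.
Qed.

Lemma ST_disjoint_triples x y z p q r : all (mem S) [:: x; y; z; p; q; r] ->
  uniq [:: x; y; z; p; q; r] -> friendly_triple G x y z -> friendly_triple G p q r ->
  has_ST_configuration G S.
Proof.
rewrite /= !in_cons ?in_nil ?orbF !negb_or => S6 U6; split_hyps.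
move=> /friendly_tripleP[_ _ yz x_y y_z] /friendly_tripleP[_ _ qr p_q q_r].
case/(dist_le2_adjVeq2 yz): y_z => y_z; case/(dist_le2_adjVeq2 qr): q_r => q_r.
- by left; exists x, y, z, p, q, r; split; last split; side_conditions sG.
- by right; left; exists p, q, r, x, y, z; split; last split; side_conditions sG.
- by right; left; exists x, y, z, p, q, r; split; last split; side_conditions sG.
by do 2 right; left; exists x, y, z, p, q, r; split; last split; side_conditions sG.
Qed.

Lemma ST_triples_sharing_last x y z p q : all (mem S) [:: x; y; z; p; q] ->
  uniq [:: x; y; z; p; q] -> friendly_triple G x y z -> friendly_triple G p q z ->
  has_ST_configuration G S.
Proof.
rewrite /= !in_cons ?in_nil ?orbF !negb_or => S5 U5; split_hyps.
move=> /friendly_tripleP[_ _ yz x_y y_z] /friendly_tripleP[_ _ qz p_q q_z].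
case/(dist_le2_adjVeq2 yz): y_z => y_z.
  by apply: (@ST_end x y z q); side_conditions sG.
case/(dist_le2_adjVeq2 qz): q_z => q_z.
  by apply: (@ST_end p q z y); side_conditions sG.
by do 2 right; left; exists x, y, z, p, q, z; split; last split; side_conditions sG.
Qed.

Lemma ST_of_two_triples : has_two_friendly_triples G S -> has_ST_configuration G S.
Proof.
move=> [x [y [z [xS yS zS xyz [p [q [r [pS qS rS pqr]]]]]]]].
move: pS qS rS; rewrite !inE => /andP[px pS] /andP[qx qS] /andP[rx rS].
have /friendly_tripleP[xy xz yz x_y y_z] := xyz.
have /friendly_tripleP[pq pr qr p_q q_r] := pqr.
have [eyp|yp] := eqVneq y p.
  subst p; have [ezq|zq] := eqVneq z q.
    by subst q; apply: (@ST_end x y z r); side_conditions sG.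
  by apply: (@ST_fork x y q z); side_conditions sG.
have [eyq|yq] := eqVneq y q.
  subst q; have [ezp|zp] := eqVneq z p.
    by subst p; apply: (@ST_fork x y z r); side_conditions sG.
  by apply: (@ST_fork x y p z); side_conditions sG.
have [eyr|yr] := eqVneq y r; first by subst r; apply: (@ST_link p q y x); side_conditions sG.
have [ezp|zp] := eqVneq z p; first by subst p; apply: (@ST_link x y z q); side_conditions sG.
have [ezq|zq] := eqVneq z q; first by subst q; apply: (@ST_link x y z p); side_conditions sG.
have [ezr|zr] := eqVneq z r.
  by subst r; apply: (@ST_triples_sharing_last x y z p q); side_conditions sG.
by apply: (@ST_disjoint_triples x y z p q r); side_conditions sG.
Qed.

Lemma two_triples_of_ST : has_ST_configuration G S -> has_two_friendly_triples G S.
Proof.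
case=> [[a [b [c [d [e [f [U Sv [a_b b_c d_e e_f]]]]]]]]|
       [[a [b [c [d [e [f [U Sv [a_b d_e e_f b_c]]]]]]]]|
       [[a [b [c [d [e [f [U U' Sv [a_b d_e b_c e_f]]]]]]]]|
       [[a [b [c [d [U Sv [a_b a_c a_d]]]]]]|
       [[a [b [c [d [U Sv [a_b b_c c_d]]]]]]|
       [[a [b [c [d [U Sv [a_b b_d b_c]]]]]]|
        [a [b [c [d [U Sv [a_b c_d b_c]]]]]]]]]]]];
  move: U Sv; try move: U'; rewrite /= !in_cons ?in_nil ?orbF !negb_or => *; split_hyps.
all: [> apply: (@two_triples_intro _ _ a b c d e f) | apply: (@two_triples_intro _ _ a b c d e f)
     | apply: (@two_triples_intro _ _ a b c d e f) | apply: (@two_triples_intro _ _ b a c c a d)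
     | apply: (@two_triples_intro _ _ a b c b c d) | apply: (@two_triples_intro _ _ a b c d b c)
     | apply: (@two_triples_intro _ _ a b c d c b)].
all: try side_conditions sG.
all: by apply/friendly_tripleP; split; side_conditions sG.
Qed.

Lemma ST_configurationP : has_ST_configuration G S <-> has_two_friendly_triples G S.
Proof. by split; [apply: two_triples_of_ST | apply: ST_of_two_triples]. Qed.

End STConfigurations.

(** * Contraction number *)

Lemma friendly_triple_contract G u v x y z : adj G u v ->
  x != v -> y != v -> z != v -> friendly_triple G x y z -> friendly_triple (contract G u v) x y z.
Proof.
move=> uv xv yv zv /friendly_tripleP[xy xz yz x_y y_z].
by apply/friendly_tripleP; split=> //; [apply: adj_contract | apply: dist_le2_contract].
Qed.

Lemma contractsS_inv k G G' : contracts k.+1 G G' ->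
  exists u v, adj G u v /\ contracts k (contract G u v) G'.
Proof. by move=> c; inversion c; exists u, v. Qed.

Lemma not_reducible0 G : ~ reducible_by G 0.
Proof.
case=> G' [c0 [D [stD ltD]]]; have eG' : G' = G by inversion c0.
by subst G'; rewrite ltnNge gamma_t2_le in ltD.
Qed.

Lemma reducible1P G : symmetric (adj G) ->
  reducible_by G 1 <-> exists D, min_semitotal_dom G D /\ has_friendly_triple G D.
Proof.
move=> sG; split=> [[G1 [/contractsS_inv[u [v [uv c0]]] [D1 [stD1 ltD1]]]]|].
  have eG1 : G1 = contract G u v by inversion c0.
  subst G1; have [D [stD cardD fD]] := semitotal_dom_uncontract sG uv stD1.
  exists D; split=> //; split=> //.
  by apply/eqP; rewrite eqn_leq gamma_t2_le // andbT cardD.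
case=> D [[stD cardD] [x [y [z [xD yD zD xyz]]]]].
have /friendly_tripleP[_ _ _ x_y _] := xyz.
exists (contract G y x); split; first by apply: contractsS (contracts0 _); rewrite sG.
exists (D :\ x); split; first exact: semitotal_dom_contract xyz.
by rewrite -cardD (cardsD1 x D) xD.
Qed.

Lemma reducible2_of_two_triples G D : symmetric (adj G) -> semitotal_dom G D ->
  #|D| = (gamma_t2 G).+1 -> has_two_friendly_triples G D -> reducible_by G 2.
Proof.
move=> sG stD cardD [x [y [z [xD yD zD xyz [p [q [r [pD qD rD pqr]]]]]]]].
have /friendly_tripleP[_ _ _ x_y _] := xyz.
have y_x : adj G y x by rewrite sG.
have pqr' : friendly_triple (contract G y x) p q r.
  move: pD qD rD; rewrite !inE => /andP[px _] /andP[qx _] /andP[rx _].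
  exact: friendly_triple_contract.
have /friendly_tripleP[_ _ _ p_q _] := pqr'.
have sG1 := contract_sym y x sG.
exists (contract (contract G y x) q p); split.
  by apply: contractsS y_x _; apply: contractsS (contracts0 _); rewrite sG1.
exists (D :\ x :\ p); split.
  exact: semitotal_dom_contract sG1 (semitotal_dom_contract sG stD xD yD zD xyz) pD qD rD pqr'.
by move: cardD; rewrite (cardsD1 x D) (cardsD1 p (D :\ x)) xD pD => -[<-].
Qed.

Lemma two_triples_of_reducible2 G : symmetric (adj G) ->
  ~ reducible_by G 1 -> reducible_by G 2 ->
  exists D, [/\ semitotal_dom G D, #|D| = (gamma_t2 G).+1 & has_two_friendly_triples G D].
Proof.
move=> sG not1 [G2 [/contractsS_inv[u [v [uv /contractsS_inv[u' [v' [uv' c0]]]]]] D2G2]].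
case: D2G2 => D2 [stD2 ltD2].
have eG2 : G2 = contract (contract G u v) u' v' by inversion c0.
subst G2; have [D1 [stD1 cardD1 fD1]] := semitotal_dom_uncontract (contract_sym u v sG) uv' stD2.
have geD1 : gamma_t2 G <= #|D1|.
  rewrite leqNgt; apply/negP => ltD1; apply: not1.
  by exists (contract G u v); split; [apply: contractsS uv (contracts0 _) | exists D1].
have [D [stD cardD two]] := semitotal_dom_uncontract_two_triples sG uv stD1 fD1.
exists D; split=> //; rewrite cardD; congr S.
by apply/eqP; rewrite eqn_leq geD1 cardD1 ltD2.
Qed.

End SemitotalContraction.

Theorem theorem5 (T : finType) (e : rel T)
  (e_sym : symmetric e) (e_irr : irreflexive e)
  (e_conn : forall x y : T, connect e x y) (two_le : 2 <= #|T|) :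
  let G := Graph [set: T] e in
  (ct_is G 1 <-> exists D, min_semitotal_dom G D /\ has_friendly_triple G D) /\
  (ct_is G 2 <->
     (forall D, min_semitotal_dom G D -> ~ has_friendly_triple G D) /\
     exists D, [/\ semitotal_dom G D, #|D| = (gamma_t2 G).+1 &
                   has_ST_configuration G D]).
Proof.
move=> G; have sG : symmetric (adj G) by move=> x y; rewrite /adj /= !inE eq_sym e_sym.
have ct1E : ct_is G 1 <-> reducible_by G 1.
  by split=> [[]//|red1]; split=> // j; rewrite ltnS leqn0 => /eqP->; apply: not_reducible0.
have no_friendly : (forall D, min_semitotal_dom G D -> ~ has_friendly_triple G D) <->
                   ~ reducible_by G 1.
  split=> [no_fr /(reducible1P sG)[D [mD fD]]|not1 D mD fD]; first exact: no_fr mD fD.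
  by apply: not1; apply/(reducible1P sG); exists D.
split; first exact: iff_trans ct1E (reducible1P sG).
split=> [[red2 not_red]|[/no_friendly not1 [D [stD cardD /(ST_configurationP _ sG) two]]]].
  have not1 : ~ reducible_by G 1 by apply: not_red.
  have [D [stD cardD two]] := two_triples_of_reducible2 sG not1 red2.
  by split; [apply/no_friendly | exists D; split=> //; apply/ST_configurationP].
split; first exact: reducible2_of_two_triples sG stD cardD two.
by case=> [|[|//]] _; [exact: not_reducible0 | exact: not1].
Qed.
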